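(* Consider the partial-block protocol without direct messaging described in the context, on a finite set of agents $A$ with a connected undirected connectivity graph $G=(A,E)$, and suppose the block length is $L=\Delta(G)+1$, where $\Delta(G)$ is the maximum degree of $G$. Then a deadlock never occurs: for every epoch $t$ it is not the case that $D(i)$ holds for all $i\in A$.
   Context: Let $A$ be a finite set of agents (agent IDs) and $G=(A,E)$ a connected undirected graph; $\Gamma_i$ denotes the set of neighbors of $i$ and $\Delta(G)$ the maximum vertex degree. Fix an integer $L\ge 1$ (block length). Each agent $i$ maintains a partial block $pb_i\subseteq A$ (a set of agent IDs). The system runs in epochs $t=0,1,2,\dots$; $pb_i^{(t)}$ is agent $i$'s partial block at the start of epoch $t$. In each epoch: (C1) every agent $i$ with $i\notin pb_i$ adds $i$ to $pb_i$; (C2) every agent $i$ sends its $pb_i$ to every neighbor $j\in\Gamma_i$. When an agent $i$ receives a partial block $P$ from a neighbor it applies the rule: if $|P\setminus\{i\}|>|pb_i\setminus\{i\}|$, agent $i$ sets $pb_i:=P$; otherwise the received block is discarded (in particular, there is no direct messaging to non-neighbors). All received partial blocks are assumed to pass all validity and similarity checks. For an agent $i$ and epoch $t$, the predicate $D(i)$ means: $pb_i^{(t)}=pb_i^{(t+1)}$ and $|pb_i^{(t)}|<L$. A deadlock at epoch $t$ means that $D(i)$ holds for all $i\in A$. *)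

From mathcomp Require Import all_boot.
Set Implicit Arguments. Unset Strict Implicit. Unset Printing Implicit Defensive.

Section Protocol.
Variable A : finType.

Definition connected_graph (e : rel A) : Prop :=
  [/\ symmetric e, irreflexive e, (exists a : A, True) & forall x y : A, connect e x y].

Definition nbrs (e : rel A) (i : A) : {set A} := [set j | e i j].

Definition max_degree (e : rel A) : nat := \max_(i : A) #|nbrs e i|.

Definition c1 (i : A) (b : {set A}) : {set A} := if i \in b then b else i |: b.

Definition receive (i : A) (b P : {set A}) : {set A} :=
  if #|P :\ i| > #|b :\ i| then P else b.

(* One epoch: every agent performs (C1); then (C2) every agent j sends its
   (post-C1) block to each neighbour; agent i processes the blocks received
   from its neighbours one after another, in an arbitrary order s. *)
Definition epoch_step (e : rel A) (pb pb' : A -> {set A}) : Prop :=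
  forall i : A, exists s : seq A,
    perm_eq s (enum (nbrs e i)) /\
    pb' i = foldl (fun b j => receive i b (c1 j (pb j))) (c1 i (pb i)) s.

(* pb t i = pb_i^{(t)}: a run of the protocol from an arbitrary initial state. *)
Definition execution (e : rel A) (pb : nat -> A -> {set A}) : Prop :=
  forall t, epoch_step e (pb t) (pb t.+1).

Definition D (L : nat) (pb : nat -> A -> {set A}) (t : nat) (i : A) : Prop :=
  pb t i = pb t.+1 i /\ #|pb t i| < L.

Definition deadlock (L : nat) (pb : nat -> A -> {set A}) (t : nat) : Prop :=
  forall i : A, D L pb t i.

End Protocol.

(* In a deadlocked epoch every agent i keeps its block, and by the receiving
   rule that block is one of the blocks Q_j := j |: pb_j sent at that epoch
   and, away from i, is at least as large as everything i received.  Hence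
   #|Q_j :\ i| <= #|Q_i :\ i| for every edge ij.  Applied in both directions
   this forces #|Q_i| = #|Q_j|, so by connectivity all the Q_j have the same
   size M; and a neighbour j missing from Q_i would give
   #|Q_i :\ j| = M > #|Q_j :\ j|.  So Q_i contains i and all its neighbours,
   M >= Delta(G) + 1 = L, and no block is short. *)
From mathcomp Require Import all_boot.

Set Implicit Arguments.
Unset Strict Implicit.
Unset Printing Implicit Defensive.

Section Blocks.
Variable A : finType.
Implicit Types (i j : A) (b : {set A}).

Lemma c1E j b : c1 j b = j |: b.
Proof. by rewrite /c1; case: ifP => // jb; apply/esym/setUidPr; rewrite sub1set. Qed.

Lemma c1D1 j b : c1 j b :\ j = b :\ j.
Proof. by rewrite c1E setDUl setDv set0U. Qed.

Lemma c1_self j b : j \in c1 j b.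
Proof. by rewrite c1E setU11. Qed.

Variables (i : A) (P : A -> {set A}).

Definition receive_all b (s : seq A) := foldl (fun b j => receive i b (P j)) b s.

Lemma card_receive_ge b j : #|b :\ i| <= #|receive i b (P j) :\ i|.
Proof. by rewrite /receive; case: ifP => // /ltnW. Qed.

Lemma card_receive_ge_sent b j : #|P j :\ i| <= #|receive i b (P j) :\ i|.
Proof. by rewrite /receive; case: ifP => // /negbT; rewrite -leqNgt. Qed.

Lemma card_receive_all_ge b s : #|b :\ i| <= #|receive_all b s :\ i|.
Proof.
elim: s b => //= j s IHs b.
exact: leq_trans (card_receive_ge b j) (IHs _).
Qed.

Lemma card_receive_all_ge_sent b s j :
  j \in s -> #|P j :\ i| <= #|receive_all b s :\ i|.
Proof.
elim: s b => //= k s IHs b; rewrite inE => /predU1P [<- | /IHs //].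
exact: leq_trans (card_receive_ge_sent b j) (card_receive_all_ge _ s).
Qed.

Lemma receive_all_in b s : receive_all b s \in b :: map P s.
Proof.
elim: s b => [|j s IHs] b /=; first by rewrite mem_seq1.
have := IHs (receive i b (P j)); rewrite /receive.
by case: ifP => _; rewrite !inE => /predU1P [-> | ->]; rewrite ?eqxx ?orbT.
Qed.

End Blocks.

Section StableEpoch.
Variables (A : finType) (e : rel A) (pb pb' : A -> {set A}).
Hypotheses (step : epoch_step e pb pb') (stable : forall i, pb i = pb' i).

Lemma stable_card_sent i j :
  e i j -> #|c1 j (pb j) :\ i| <= #|c1 i (pb i) :\ i|.
Proof.
move=> eij; have [s [perm_s pb'_i]] := step i.
rewrite c1D1 (stable i) pb'_i.
apply: (card_receive_all_ge_sent i (fun j => c1 j (pb j))).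
by rewrite (perm_mem perm_s) mem_enum inE.
Qed.

Lemma stable_block_sent i : exists j, pb i = c1 j (pb j).
Proof.
have [s [_ pb'_i]] := step i.
have := receive_all_in i (fun j => c1 j (pb j)) (c1 i (pb i)) s.
rewrite /receive_all -pb'_i -stable inE => /predU1P [-> | /mapP [j _ ->]].
  by exists i.
by exists j.
Qed.

End StableEpoch.

Section Dominance.
Variables (A : finType) (e : rel A) (Q : A -> {set A}).
Hypotheses (e_sym : symmetric e) (e_irr : irreflexive e).
Hypotheses (e_conn : forall x y, connect e x y) (Q_self : forall x, x \in Q x).
Hypothesis Q_dom : forall i j, e i j -> #|Q j :\ i| <= #|Q i :\ i|.

Lemma card_edge_le i j : e i j -> #|Q i| <= #|Q j|.
Proof.
rewrite e_sym => /Q_dom le_ji.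
rewrite [#|Q i|](cardsD1 j) [#|Q j|](cardsD1 j) Q_self.
by case: (j \in Q i) => /=; rewrite ?leq_add2l ?add0n // (leq_trans le_ji).
Qed.

Lemma card_dominant_const x y : #|Q x| = #|Q y|.
Proof.
suff closedQ : closed e [pred z | #|Q z| == #|Q x|].
  by have := closed_connect closedQ (e_conn x y); rewrite !inE eqxx => /esym/eqP.
move=> z w ezw; rewrite !inE.
have ewz : e w z by rewrite e_sym.
by rewrite (@anti_leq #|Q z| #|Q w|) // !card_edge_le.
Qed.

Lemma nbr_in_dominant i j : e i j -> j \in Q i.
Proof.
rewrite e_sym => /Q_dom; apply: contraTT => jNQi.
have -> : Q i :\ j = Q i by apply/setDidPl; rewrite disjoint_sym disjoints1.
by rewrite -ltnNge (card_dominant_const i j) [#|Q j|](cardsD1 j) Q_self.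
Qed.

Lemma card_nbrs_lt i : #|nbrs e i| < #|Q i|.
Proof.
have sub : i |: nbrs e i \subset Q i.
  by apply/subsetP => j /setU1P [-> | ]; rewrite ?inE ?Q_self // => /nbr_in_dominant.
by have := subset_leq_card sub; rewrite cardsU1 inE e_irr.
Qed.

Lemma max_degree_lt_card x : max_degree e < #|Q x|.
Proof.
rewrite /max_degree (bigmax_eq_arg x) //.
by apply: leq_trans (card_nbrs_lt _) _; rewrite (card_dominant_const _ x).
Qed.

End Dominance.

Theorem theorem2 (A : finType) (e : rel A) (pb : nat -> A -> {set A}) :
  connected_graph e -> execution e pb ->
  forall t : nat, ~ deadlock (max_degree e).+1 pb t.
Proof.
move=> [e_sym e_irr [a _] e_conn] exe t dl.
have stable i : pb t i = pb t.+1 i by have [] := dl i.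
have [j pb_a] := stable_block_sent (exe t) stable a.
have := max_degree_lt_card e_sym e_irr e_conn (fun x => c1_self x (pb t x))
  (stable_card_sent (exe t) stable) j.
by have [_] := dl a; rewrite pb_a ltnS leqNgt => /negP.
Qed.
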